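(* For $a>0$, $S>0$, $\sigma=e^{-aS}$, the scaling function $\mathcal F(S,a,\lambda)$ (defined in the context) satisfies $$\mathcal F(S,a,0)=\frac{2a^3\sigma^2(1+\sigma^2)}{(1-\sigma^2)^3},\qquad \frac{\partial}{\partial\lambda}\mathcal F(S,a,\lambda)\Big|_{\lambda=0}=-\frac{a\,\sigma^2(385-189\sigma+154\sigma^2+54\sigma^3-11\sigma^4-9\sigma^5)}{70(1-\sigma)(1+\sigma)^4}.$$
   Context: For $a>0$, $\lambda\ge0$, let $A=\sqrt{1+3\lambda/a^2}$, $\sigma=e^{-aS}$, $W(\sigma,A)=4A^3(1-\sigma)^3+12A^2(1-\sigma)^2(1+\sigma)+A(1-\sigma)(11+38\sigma+11\sigma^2)+3(1+\sigma)(1+8\sigma+\sigma^2)$, $U(\sigma,A)=2A^2(1-\sigma)^2+5A(1-\sigma)(1+\sigma)+3(1+3\sigma+\sigma^2)$, $Y(S,a,\lambda)=a\bigl(-3A-36\,\sigma U/((1-\sigma)W)\bigr)$. Let $H(S,a,\lambda)$ be the unique solution on $S\in(0,\infty)$ of $6\partial_S H+4YH+(\partial_S Y)^2=0$ with $H\to0$ as $S\to\infty$, and $\mathcal F(S,a,\lambda)=H(S,a,\lambda)/3$. *)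

From Stdlib Require Import Reals Lra.
Open Scope R_scope.

Definition Acoef (a l : R) : R := sqrt (1 + 3 * l / a ^ 2).

Definition Wfun (s A : R) : R :=
  4 * A ^ 3 * (1 - s) ^ 3 + 12 * A ^ 2 * (1 - s) ^ 2 * (1 + s)
  + A * (1 - s) * (11 + 38 * s + 11 * s ^ 2)
  + 3 * (1 + s) * (1 + 8 * s + s ^ 2).

Definition Ufun (s A : R) : R :=
  2 * A ^ 2 * (1 - s) ^ 2 + 5 * A * (1 - s) * (1 + s) + 3 * (1 + 3 * s + s ^ 2).

Definition Yfun (S a l : R) : R :=
  let A := Acoef a l in
  let s := exp (- a * S) in
  a * (- 3 * A - 36 * s * Ufun s A / ((1 - s) * Wfun s A)).

Definition IsSolH (a l : R) (h : R -> R) : Prop :=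
  (forall S, 0 < S ->
     exists dY dh,
       derivable_pt_lim (fun t => Yfun t a l) S dY /\
       derivable_pt_lim h S dh /\
       6 * dh + 4 * Yfun S a l * h S + dY ^ 2 = 0) /\
  (forall eps, 0 < eps -> exists M, forall S, M < S -> Rabs (h S) < eps).

Definition Fcal (H : R -> R -> R) (S l : R) : R := H S l / 3.

(* Put u = A - 1, so that lambda = a^2 (u^2 + 2 u) / 3.  The function
   a^3 (h0(sigma) + u h1(sigma)) solves the equation for H up to a defect of
   order u^2, uniformly in sigma <= e^(-aS); this is a polynomial identity.
   Since Y <= -3a, an integrating factor shows that a solution of
   6 R' + 4 Y R + G = 0 vanishing at infinity satisfies |R| <= sup |G| / (12 a).
   Hence H(S, lambda) = a^3 (h0 + u h1) + O(u^2), which gives F(S, 0) = a^3 h0 / 3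
   and, as u ~ 3 lambda / (2 a^2), the lambda-derivative a h1 / 2. *)

From Stdlib Require Import Reals Lra List.
From Coquelicot Require Import Coquelicot.
Import ListNotations.
Open Scope R_scope.
Lemma nondecreasing_of_derive_ge0 (f : R -> R) (a x y : R) :
  (forall t, a <= t -> exists d, is_derive f t d /\ 0 <= d) ->
  a <= x <= y -> f x <= f y.
Proof.
  intros hf [hax hxy].
  assert (hD : forall t, a <= t -> is_derive f t (Derive f t) /\ 0 <= Derive f t).
  { intros t ht. destruct (hf t ht) as [d [hd hd0]].
    rewrite (is_derive_unique f t d hd). auto. }
  destruct (Req_dec x y) as [<-|hne]; [lra|].
  destruct (MVT_gen f x y (Derive f)) as [c [hc e]];
    rewrite Rmin_left, Rmax_right in * by lra.
  - intros t ht; apply hD; lra.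
  - intros t ht; apply continuity_pt_filterlim,
      (ex_derive_continuous (K := R_AbsRing) (V := R_NormedModule)).
    exists (Derive f t); apply hD; lra.
  - assert (0 <= Derive f c * (y - x)) by (apply Rmult_le_pos; [apply hD|]; lra).
    lra.
Qed.

Lemma exists_integrating_factor (Y : R -> R) (S0 : R) :
  0 < S0 -> (forall t, 0 < t -> continuous Y t) ->
  exists I : R -> R, I S0 = 1 /\ (forall t, 0 < I t) /\
    (forall t, 0 < t -> is_derive I t (Y t * I t)).
Proof.
  intros hS0 hY.
  set (J := fun t => RInt Y S0 t).
  assert (hJ : forall t, 0 < t -> is_derive J t (Y t)).
  { intros t ht. apply (is_derive_RInt Y J S0 t); [|apply hY; exact ht].
    assert (ht2 : 0 < t / 2) by lra.
    exists (mkposreal _ ht2). intros b hb.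
    change (Rabs (b - t) < t / 2) in hb. apply Rabs_lt_between' in hb.
    apply (RInt_correct Y S0 b), ex_RInt_continuous. intros z hz. apply hY.
    assert (0 < Rmin S0 b) by (apply Rmin_glb_lt; lra). lra. }
  exists (fun t => exp (J t)). split; [|split].
  - unfold J. rewrite RInt_point. apply exp_0.
  - intro x. apply exp_pos.
  - intros x hx. apply (is_derive_comp exp J x); [apply is_derive_exp | apply hJ, hx].
Qed.

(* The integrating factor [I' = (2/3) Y I] makes [I (R - k)] nondecreasing for
   [k = M / (4 c)]; a positive value at [S0] would then keep [R] away from 0. *)
Lemma linear_ode_le_bound (S0 c M : R) (Rf Y F : R -> R) :
  0 < S0 -> 0 < c -> 0 <= M ->
  (forall t, 0 < t -> continuous Y t) ->
  (forall t, 0 < t -> exists d, is_derive Rf t d /\ 6 * d + 4 * Y t * Rf t + F t = 0) ->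
  (forall t, S0 <= t -> Y t <= - c) ->
  (forall t, S0 <= t -> F t <= M) ->
  is_lim Rf p_infty 0 ->
  Rf S0 <= M / (4 * c).
Proof.
  intros hS0 hc hM hY hode hYc hF hlim.
  set (k := M / (4 * c)).
  assert (hk : 0 <= k) by (apply Rdiv_le_0_compat; lra).
  assert (hck : 4 * c * k = M) by (unfold k; field; lra).
  destruct (exists_integrating_factor (fun t => 2 / 3 * Y t) S0 hS0) as [I [hI0 [hIpos hI]]].
  { intros t ht. apply (continuous_scal_r (2 / 3) Y t), hY, ht. }
  assert (hIle1 : forall t, S0 <= t -> I t <= 1).
  { intros t ht. rewrite <- hI0.
    enough (- I S0 <= - I t) by lra.
    apply (nondecreasing_of_derive_ge0 (fun x => - I x) S0); [|lra].
    intros x hx. exists (- (2 / 3 * Y x * I x)). split.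
    - apply (is_derive_opp I x), hI. lra.
    - specialize (hYc x hx). specialize (hIpos x). nra. }
  assert (hPhi : forall t, S0 <= t -> Rf S0 - k <= I t * (Rf t - k)).
  { intros t ht. replace (Rf S0 - k) with (I S0 * (Rf S0 - k)) by (rewrite hI0; ring).
    apply (nondecreasing_of_derive_ge0 (fun x => I x * (Rf x - k)) S0); [|lra].
    intros x hx. destruct (hode x ltac:(lra)) as [d [hd he]].
    exists (I x * (- (2 / 3) * Y x * k - F x / 6)). split.
    - assert (hD := is_derive_mult I (fun x => Rf x - k) x _ _ (hI x ltac:(lra))
        (is_derive_minus Rf (fun _ => k) x _ _ hd (is_derive_const k x)) Rmult_comm).
      unfold mult, plus, minus, zero, opp in hD; simpl in hD.
      unfold plus, opp in hD; simpl in hD.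
      replace (I x * (- (2 / 3) * Y x * k - F x / 6))
        with (2 / 3 * Y x * I x * (Rf x - k) + I x * (d + - 0))
        by (replace (F x) with (- 6 * d - 4 * Y x * Rf x) by lra; field).
      exact hD.
    - specialize (hYc x hx). specialize (hF x hx). specialize (hIpos x).
      apply Rmult_le_pos; nra. }
  apply Rnot_lt_le. intro hlt.
  apply is_lim_spec in hlim.
  destruct (hlim (mkposreal _ (proj2 (Rlt_0_minus _ _) hlt))) as [T hT]. simpl in hT.
  set (t := Rmax T S0 + 1).
  specialize (hT t ltac:(unfold t; generalize (Rmax_l T S0); lra)).
  assert (ht : S0 <= t) by (unfold t; generalize (Rmax_r T S0); lra).
  specialize (hPhi t ht). specialize (hIle1 t ht). specialize (hIpos t).
  apply Rabs_lt_between in hT. nra.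
Qed.

Lemma linear_ode_abs_bound (S0 c M : R) (Rf Y F : R -> R) :
  0 < S0 -> 0 < c -> 0 <= M ->
  (forall t, 0 < t -> continuous Y t) ->
  (forall t, 0 < t -> exists d, is_derive Rf t d /\ 6 * d + 4 * Y t * Rf t + F t = 0) ->
  (forall t, S0 <= t -> Y t <= - c) ->
  (forall t, S0 <= t -> Rabs (F t) <= M) ->
  is_lim Rf p_infty 0 ->
  Rabs (Rf S0) <= M / (4 * c).
Proof.
  intros hS0 hc hM hY hode hYc hF hlim. apply Rabs_le. split.
  - enough (- Rf S0 <= M / (4 * c)) by lra.
    apply (linear_ode_le_bound S0 c M (fun t => - Rf t) Y (fun t => - F t)); auto.
    + intros t ht. destruct (hode t ht) as [d [hd he]].
      exists (- d). split; [apply (is_derive_opp Rf t d hd) | lra].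
    + intros t ht. specialize (hF t ht). apply Rabs_le_between in hF. lra.
    + replace (Finite 0) with (Rbar_opp 0) by (simpl; rewrite Ropp_0; reflexivity).
      apply is_lim_opp, hlim.
  - apply (linear_ode_le_bound S0 c M Rf Y F); auto.
    intros t ht. specialize (hF t ht). apply Rabs_le_between in hF. lra.
Qed.

Fixpoint horner (p : list R) (x : R) : R :=
  match p with nil => 0 | c :: p' => c + x * horner p' x end.

Fixpoint horner2 (P : list (list R)) (x y : R) : R :=
  match P with nil => 0 | p :: P' => horner p y + x * horner2 P' x y end.

Fixpoint coef_abs_sum (p : list R) : R :=
  match p with nil => 0 | c :: p' => Rabs c + coef_abs_sum p' end.

Fixpoint coef_abs_sum2 (P : list (list R)) : R :=
  match P with nil => 0 | p :: P' => coef_abs_sum p + coef_abs_sum2 P' end.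

Lemma horner_abs_le p x : Rabs x <= 1 -> Rabs (horner p x) <= coef_abs_sum p.
Proof.
  intro hx. induction p as [|c p IH]; simpl.
  - rewrite Rabs_R0; lra.
  - eapply Rle_trans; [apply Rabs_triang|]. rewrite Rabs_mult.
    assert (Rabs x * Rabs (horner p x) <= 1 * coef_abs_sum p)
      by (apply Rmult_le_compat; auto using Rabs_pos).
    lra.
Qed.

Lemma horner2_abs_le P x y :
  Rabs x <= 1 -> Rabs y <= 1 -> Rabs (horner2 P x y) <= coef_abs_sum2 P.
Proof.
  intros hx hy. induction P as [|p P IH]; simpl.
  - rewrite Rabs_R0; lra.
  - eapply Rle_trans; [apply Rabs_triang|]. rewrite Rabs_mult.
    assert (Rabs x * Rabs (horner2 P x y) <= 1 * coef_abs_sum2 P)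
      by (apply Rmult_le_compat; auto using Rabs_pos).
    generalize (horner_abs_le p y hy). lra.
Qed.

(* Closes nonzeroness side conditions whose factors are, up to [ring], among
   the hypotheses [_ <> 0]. *)
Ltac factors_nonzero :=
  repeat split;
  repeat (apply Rmult_integral_contrapositive_currified || apply pow_nonzero);
  first
    [ lra
    | match goal with
      | h : _ <> 0 |- _ <> 0 => let e := fresh in intro e; apply h; rewrite <- e; ring
      end ].

Definition psi (s A : R) : R := s * Ufun s A / ((1 - s) * Wfun s A).

Definition dUfun (s A : R) : R := - 4 * A ^ 2 * (1 - s) - 10 * A * s + 9 + 6 * s.

Definition dWfun (s A : R) : R :=
  - 12 * A ^ 3 * (1 - s) ^ 2 + 12 * A ^ 2 * (- 2 * (1 - s) * (1 + s) + (1 - s) ^ 2)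
  + A * (- (11 + 38 * s + 11 * s ^ 2) + (1 - s) * (38 + 22 * s))
  + 3 * ((1 + 8 * s + s ^ 2) + (1 + s) * (8 + 2 * s)).

Definition dpsi (s A : R) : R :=
  ((Ufun s A + s * dUfun s A) * ((1 - s) * Wfun s A)
   - s * Ufun s A * (- Wfun s A + (1 - s) * dWfun s A))
  / ((1 - s) ^ 2 * Wfun s A ^ 2).

Definition h0 (s : R) : R := 6 * s ^ 2 * (1 + s ^ 2) / ((1 - s) ^ 3 * (1 + s) ^ 3).

Definition dh0 (s : R) : R := 12 * s * (1 + 4 * s ^ 2 + s ^ 4) / ((1 - s) ^ 4 * (1 + s) ^ 4).

Definition h1 (s : R) : R :=
  - (s ^ 2 * (385 - 189 * s + 154 * s ^ 2 + 54 * s ^ 3 - 11 * s ^ 4 - 9 * s ^ 5))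
  / (35 * (1 - s) * (1 + s) ^ 4).

Definition dh1 (s : R) : R :=
  (- 770 * s + 1722 * s ^ 2 - 2338 * s ^ 3 + 570 * s ^ 4 + 74 * s ^ 5 + 30 * s ^ 6
   - 38 * s ^ 7 - 18 * s ^ 8) / (35 * (1 - s) ^ 2 * (1 + s) ^ 5).

(* [a^(-4) (6 q' + 4 Y q + (Y')^2)] for [q = approx_H a u] below, in the variable
   [s = exp (- a S)], with [A = 1 + u]. *)
Definition defect (s u : R) : R :=
  1296 * s ^ 2 * dpsi s (1 + u) ^ 2 - 6 * s * (dh0 s + u * dh1 s)
  + 4 * (- 3 * (1 + u) - 36 * psi s (1 + u)) * (h0 s + u * h1 s).

(* Obtained by computer algebra.  That [u ^ 2] divides the numerator of [defect]
   expresses that [h0] and [h1] solve the equation at orders 0 and 1 in [u]. *)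
Definition defect_cofactor : list (list R) :=

  [[];
   [];
   [9185400000; 52723440000; 138374964000; 219634850400; 234869790540; 178307431680; 98562730560; 39978408960; 11811623040; 2479411200; 351052800; 30105600; 1182720];
   [(-19527480000); (-174952008000); (-622327204800); (-1242589439280); (-1595524065828); (-1408522363584); (-884242099776); (-399980448000); (-129885372288); (-29611115520); (-4508120064); (-412188672); (-17138688)];
   [(-38279304000); (-19287676800); 647121721680; 2386411631184; 4249021815192; 4677211710528; 3464852455680; 1787825458944; 647118017280; 161685629952; 26628919296; 2606628864; 115046400];
   [25178040000; 290959344000; 345785576400; (-1553337822960); (-5572027149096); (-8513545580352); (-7805207351040); (-4712326205184); (-1929891071232); (-533434678272); (-95619969024); (-10061438976); (-472664064)];
   [37368864000; (-31648341600); (-679717378800); (-390057861288); 3609040319052; 9328001687616; 11226373330368; 8148157074432; 3832472462976; 1182486567936; 232007605248; 26335832064; 1319709696];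
   [14951952000; (-51407244000); 168338359440; 841973613384; (-885869167044); (-6479677706880); (-10908090884544); (-9745139969280); (-5328543996288); (-1848173463552); (-398527687680); (-48905336832); (-2615854080)];
   [(-1398384000); (-95395363200); (-261039939840); (-666254877840); (-312615934176); 3050428435200; 7517379353088; 8318338122240; 5299633069056; 2067931459584; 489785401344; 64843149312; 3688636416];
   [(-26844048000); (-57809635200); 272620169280; 865272840432; 822289019424; (-991143303936); (-3959778181632); (-5227663025664); (-3776818885632); (-1626505949184); (-416298393600); (-58469191680); (-3468288000)];
   [(-1073736000); 95925060000; 89576598960; (-563622710640); (-1003354745448); 26059686144; 1826781382272; 2610304501248; 1914589847808; 825354350592; 207675439104; 27773276160; 1484593152];
   [5814504000; (-21505845600); (-139583713680); 101031062640; 682707344184; 313706204544; (-863238718080); (-1275636519936); (-734080331520); (-180512913408); 2268628992; 9801093120; 1377073152];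
   [(-6908328000); 1217116800; 83419611840; 49801213776; (-343002479472); (-376271981184); 358996727808; 738445307904; 328818387456; (-66598164480); (-102725591040); (-32294326272); (-3457658880)];
   [380376000; 17050262400; (-31920572160); (-105857410224); 96227176464; 321675885696; 1130425344; (-388326933504); (-241051276800); 46479046656; 92613206016; 32456306688; 3769159680];
   [1165104000; (-3739111200); (-19750986000); 53957764224; 62703179256; (-131898678912); (-141997293696); 96948112896; 149526561024; 15063017472; (-42464483328); (-19900588032); (-2697676800)];
   [36288000; (-2399652000); 7573572720; 11681925600; (-46595127336); (-16941245952); 77024386176; 32905921536; (-44176469760); (-24946065408); 8298829824; 7754539008; 1336793088];
   [(-59616000); 219715200; 2020587840; (-7900916016); (-2299125984); 26029081344; (-410755584); (-28483305984); (-6212809728); 7915450368; 1209311232; (-1655058432); (-440328192)];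
   [10368000; 64195200; (-495348480); (-473986224); 4898558496; (-2017020672); (-10291459584); 2706642432; 8562465792; 2072088576; (-418897920); 91607040; 83435520];
   [0; (-14839200); (-4424400); 363437328; (-389216868); (-1718777856); 2015806272; 2718217728; (-1689342336); (-2248679424); (-597531648); (-46362624); (-8365056)];
   [0; 583200; 9141840; (-32773440); (-96276372); 325081920; 222330048; (-827640576); (-328102272); 608885760; 428485632; 87502848; 5606400];
   [0; 0; (-755280); (-760800); 16937880; (-6498240); (-89035008); 49824000; 163977984; (-35238912); (-120827904); (-45576192); (-4786176)];
   [0; 0; 19440; 231264; (-864552); (-2205504); 6986496; 7250688; (-19254528); (-11344896); 15126528; 11317248; 1849344];
   [0; 0; 0; (-11736); 11580; 161856; (-133440); (-815616); 489600; 1760256; (-476160); (-1345536); (-353280)];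
   [0; 0; 0; 216; 108; (-3456); (-1728); 20736; 10368; (-55296); (-27648); 55296; 27648]].

Lemma defect_factorization s u : 1 - s <> 0 -> 1 + s <> 0 -> Wfun s (1 + u) <> 0 ->
  35 * defect s u * ((1 - s) ^ 4 * (1 + s) ^ 5 * Wfun s (1 + u) ^ 4)
  = u ^ 2 * horner2 defect_cofactor s u.
Proof.
  intros h1s h2s hW.
  unfold defect, dpsi, psi, dh0, dh1, h0, h1, dUfun, dWfun.
  field_simplify_eq; [|factors_nonzero].
  unfold Wfun, Ufun, defect_cofactor, horner2, horner.
  ring.
Qed.

Lemma is_derive_psi s A : 1 - s <> 0 -> Wfun s A <> 0 ->
  is_derive (fun s => psi s A) s (dpsi s A).
Proof.
  intros h1s hW. unfold psi, dpsi, dUfun, dWfun. unfold Wfun in *. unfold Ufun.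
  auto_derive; [factors_nonzero|]. field. factors_nonzero.
Qed.

Lemma is_derive_h0 s : 1 - s <> 0 -> 1 + s <> 0 -> is_derive h0 s (dh0 s).
Proof.
  intros h1s h2s. unfold h0, dh0.
  auto_derive; [factors_nonzero|]. field. factors_nonzero.
Qed.

Lemma is_derive_h1 s : 1 - s <> 0 -> 1 + s <> 0 -> is_derive h1 s (dh1 s).
Proof.
  intros h1s h2s. unfold h1, dh1.
  auto_derive; [factors_nonzero|]. field. factors_nonzero.
Qed.

Lemma Acoef_ge1 a l : 0 < a -> 0 <= l -> 1 <= Acoef a l.
Proof.
  intros ha hl. unfold Acoef. rewrite <- sqrt_1 at 1. apply sqrt_le_1_alt.
  assert (0 <= 3 * l / a ^ 2) by (apply Rdiv_le_0_compat; [lra | apply pow_lt, ha]).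
  lra.
Qed.

Lemma Acoef_sq a l : 0 < a -> 0 <= l -> Acoef a l ^ 2 = 1 + 3 * l / a ^ 2.
Proof.
  intros ha hl. unfold Acoef. rewrite <- Rsqr_pow2. apply Rsqr_sqrt.
  assert (0 <= 3 * l / a ^ 2) by (apply Rdiv_le_0_compat; [lra | apply pow_lt, ha]).
  lra.
Qed.

Lemma exp_neg_mul_bounds a t : 0 < a -> 0 < t -> 0 < exp (- a * t) < 1.
Proof.
  intros ha ht. split; [apply exp_pos|].
  rewrite <- exp_0. apply exp_increasing. nra.
Qed.

Lemma Wfun_ge3 s A : 0 <= s <= 1 -> 0 <= A -> 3 <= Wfun s A.
Proof.
  intros hs hA.
  assert (hx : 0 <= A * (1 - s)) by nra.
  replace (Wfun s A) with (4 * (A * (1 - s)) ^ 3 + 12 * (A * (1 - s)) ^ 2 * (1 + s)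
    + A * (1 - s) * (11 + 38 * s + 11 * s ^ 2) + 3 * (1 + s) * (1 + 8 * s + s ^ 2))
    by (unfold Wfun; ring).
  generalize (pow_le _ 2 hx) (pow_le _ 3 hx). nra.
Qed.

Lemma Ufun_ge0 s A : 0 <= s <= 1 -> 0 <= A -> 0 <= Ufun s A.
Proof.
  intros hs hA.
  assert (hx : 0 <= A * (1 - s)) by nra.
  replace (Ufun s A) with (2 * (A * (1 - s)) ^ 2 + 5 * A * (1 - s) * (1 + s)
    + 3 * (1 + 3 * s + s ^ 2)) by (unfold Ufun; ring).
  generalize (pow_le _ 2 hx). nra.
Qed.

Lemma psi_ge0 s A : 0 <= s < 1 -> 0 <= A -> 0 <= psi s A.
Proof.
  intros hs hA. unfold psi. apply Rdiv_le_0_compat.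
  - apply Rmult_le_pos; [lra | apply Ufun_ge0; lra].
  - generalize (Wfun_ge3 s A ltac:(lra) hA). nra.
Qed.

Lemma Yfun_psi t a l :
  Yfun t a l = a * (- 3 * Acoef a l - 36 * psi (exp (- a * t)) (Acoef a l)).
Proof. unfold Yfun, psi, Rdiv. ring. Qed.

Lemma Yfun_le a l t : 0 < a -> 0 <= l -> 0 < t -> Yfun t a l <= - 3 * a.
Proof.
  intros ha hl ht. rewrite Yfun_psi.
  generalize (Acoef_ge1 a l ha hl) (exp_neg_mul_bounds a t ha ht). intros hA hs.
  generalize (psi_ge0 (exp (- a * t)) (Acoef a l) ltac:(lra) ltac:(lra)). nra.
Qed.

Lemma is_derive_comp_exp_neg (f : R -> R) (df a t : R) :
  is_derive f (exp (- a * t)) df ->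
  is_derive (fun t => f (exp (- a * t))) t (- a * exp (- a * t) * df).
Proof.
  intro hf.
  assert (he : is_derive (fun t => exp (- a * t)) t (- a * exp (- a * t)))
    by (auto_derive; [exact I | ring]).
  exact (is_derive_comp f (fun t => exp (- a * t)) t df _ hf he).
Qed.

Lemma is_derive_Yfun a l t : 0 < a -> 0 <= l -> 0 < t ->
  is_derive (fun t => Yfun t a l) t
    (36 * a ^ 2 * exp (- a * t) * dpsi (exp (- a * t)) (Acoef a l)).
Proof.
  intros ha hl ht.
  set (A := Acoef a l). set (s := exp (- a * t)).
  assert (hs := exp_neg_mul_bounds a t ha ht). fold s in hs.
  assert (hA : 1 <= A) by (apply Acoef_ge1; assumption).
  assert (hW := Wfun_ge3 s A ltac:(lra) ltac:(lra)).
  assert (hG := is_derive_plus _ _ s _ _ (is_derive_const (- 3 * a * A) s)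
    (is_derive_scal (fun y => psi y A) s (- 36 * a) _ (is_derive_psi s A ltac:(lra) ltac:(lra)))).
  unfold plus, zero in hG; simpl in hG. rewrite Rplus_0_l in hG.
  assert (hY := is_derive_comp_exp_neg _ _ a t hG).
  replace (36 * a ^ 2 * s * dpsi s A) with (- a * s * (- 36 * a * dpsi s A)) by ring.
  apply (is_derive_ext _ _ t _ (fun t => eq_sym (Yfun_psi t a l))).
  eapply is_derive_ext; [|exact hY]. intro x. simpl. fold A. ring.
Qed.

Definition approx_H (a u t : R) : R :=
  a ^ 3 * (h0 (exp (- a * t)) + u * h1 (exp (- a * t))).

Lemma is_derive_h_profile u s : - 1 < s < 1 ->
  is_derive (fun s => h0 s + u * h1 s) s (dh0 s + u * dh1 s).
Proof.
  intro hs.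
  exact (is_derive_plus _ _ s _ _ (is_derive_h0 s ltac:(lra) ltac:(lra))
    (is_derive_scal h1 s u _ (is_derive_h1 s ltac:(lra) ltac:(lra)))).
Qed.

Lemma is_derive_approx_H a u t : 0 < a -> 0 < t ->
  is_derive (approx_H a u) t
    (- a ^ 4 * exp (- a * t) * (dh0 (exp (- a * t)) + u * dh1 (exp (- a * t)))).
Proof.
  intros ha ht. destruct (exp_neg_mul_bounds a t ha ht) as [hs0 hs1].
  assert (hD := is_derive_scal _ t (a ^ 3) _
    (is_derive_comp_exp_neg _ _ a t (is_derive_h_profile u (exp (- a * t)) ltac:(lra)))).
  replace (- a ^ 4 * exp (- a * t) * (dh0 (exp (- a * t)) + u * dh1 (exp (- a * t))))
    with (a ^ 3 * (- a * exp (- a * t) * (dh0 (exp (- a * t)) + u * dh1 (exp (- a * t)))))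
    by ring.
  exact hD.
Qed.

Lemma is_lim_exp_neg_mul a : 0 < a -> is_lim (fun t => exp (- a * t)) p_infty 0.
Proof.
  intro ha. apply (is_lim_comp exp (fun t => - a * t) p_infty 0 m_infty).
  - apply is_lim_exp_m.
  - apply is_lim_spec. intro M. exists (- M / a). intros x hx.
    apply (Rmult_lt_compat_l a) in hx; [|exact ha].
    replace (a * (- M / a)) with (- M) in hx by (field; lra). lra.
  - exists 0. intros x _. discriminate.
Qed.

Lemma is_lim_approx_H a u : 0 < a -> is_lim (approx_H a u) p_infty 0.
Proof.
  intro ha.
  assert (hc : continuous (fun s => a ^ 3 * (h0 s + u * h1 s)) 0).
  { apply (ex_derive_continuous (K := R_AbsRing) (V := R_NormedModule)).
    eexists. apply is_derive_scal, is_derive_h_profile. lra. }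
  replace (Finite 0) with (Finite (a ^ 3 * (h0 0 + u * h1 0)))
    by (f_equal; unfold h0, h1; field).
  exact (is_lim_comp_continuous _ _ p_infty 0 (is_lim_exp_neg_mul a ha) hc).
Qed.

Lemma defect_denominator_ge s s0 u : 0 < s <= s0 -> s0 < 1 -> 0 <= u ->
  2835 * (1 - s0) ^ 4 <= 35 * ((1 - s) ^ 4 * (1 + s) ^ 5 * Wfun s (1 + u) ^ 4).
Proof.
  intros hs hs0 hu.
  assert (h1 : (1 - s0) ^ 4 <= (1 - s) ^ 4) by (apply pow_incr; lra).
  assert (h2 : 1 <= (1 + s) ^ 5) by (apply pow_R1_Rle; lra).
  assert (h3 : 3 ^ 4 <= Wfun s (1 + u) ^ 4)
    by (apply pow_incr; generalize (Wfun_ge3 s (1 + u) ltac:(lra) ltac:(lra)); lra).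
  assert (h0 : 0 <= (1 - s0) ^ 4) by (apply pow_le; lra).
  replace (2835 * (1 - s0) ^ 4) with (35 * ((1 - s0) ^ 4 * 1 * 3 ^ 4)) by ring.
  apply Rmult_le_compat_l; [lra|].
  apply Rmult_le_compat; [nra | lra | apply Rmult_le_compat; lra | exact h3].
Qed.

Lemma defect_abs_le s s0 u : 0 < s <= s0 -> s0 < 1 -> 0 <= u <= 1 ->
  Rabs (defect s u) <= coef_abs_sum2 defect_cofactor / (2835 * (1 - s0) ^ 4) * u ^ 2.
Proof.
  intros hs hs0 hu.
  assert (hW := Wfun_ge3 s (1 + u) ltac:(lra) ltac:(lra)).
  assert (hden := defect_denominator_ge s s0 u hs hs0 ltac:(lra)).
  assert (hpos : 0 < 2835 * (1 - s0) ^ 4) by (generalize (pow_lt (1 - s0) 4 ltac:(lra)); lra).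
  assert (hN := horner2_abs_le defect_cofactor s u
    ltac:(apply Rabs_le; lra) ltac:(apply Rabs_le; lra)).
  assert (e := defect_factorization s u ltac:(lra) ltac:(lra) ltac:(lra)).
  assert (hD : Rabs (defect s u) * (35 * ((1 - s) ^ 4 * (1 + s) ^ 5 * Wfun s (1 + u) ^ 4))
               = u ^ 2 * Rabs (horner2 defect_cofactor s u)).
  { rewrite <- (Rabs_pos_eq (35 * _)) by lra.
    rewrite <- (Rabs_pos_eq (u ^ 2)) by apply pow2_ge_0.
    rewrite <- !Rabs_mult, <- e. f_equal. ring. }
  apply (Rmult_le_reg_r (2835 * (1 - s0) ^ 4)); [exact hpos|].
  replace (coef_abs_sum2 defect_cofactor / (2835 * (1 - s0) ^ 4) * u ^ 2 * (2835 * (1 - s0) ^ 4))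
    with (u ^ 2 * coef_abs_sum2 defect_cofactor) by (field; lra).
  apply Rle_trans with (Rabs (defect s u) * (35 * ((1 - s) ^ 4 * (1 + s) ^ 5 * Wfun s (1 + u) ^ 4))).
  - apply Rmult_le_compat_l; [apply Rabs_pos | exact hden].
  - rewrite hD. apply Rmult_le_compat_l; [apply pow2_ge_0 | exact hN].
Qed.

Lemma is_lim_p_infty_of_eps (f : R -> R) :
  (forall eps, 0 < eps -> exists M, forall t, M < t -> Rabs (f t) < eps) ->
  is_lim f p_infty 0.
Proof.
  intro hf. apply is_lim_spec. intro eps.
  destruct (hf eps (cond_pos eps)) as [M hM].
  exists M. intros t ht. rewrite Rminus_0_r. apply hM, ht.
Qed.

Lemma approximation_residual_ode a l (h : R -> R) t : 0 < a -> 0 <= l -> 0 < t ->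
  (exists dY dh, derivable_pt_lim (fun t => Yfun t a l) t dY /\
     derivable_pt_lim h t dh /\ 6 * dh + 4 * Yfun t a l * h t + dY ^ 2 = 0) ->
  let u := Acoef a l - 1 in
  exists d, is_derive (fun t => h t - approx_H a u t) t d /\
    6 * d + 4 * Yfun t a l * (h t - approx_H a u t) + a ^ 4 * defect (exp (- a * t)) u = 0.
Proof.
  intros ha hl ht [dY [dh [hY [hh he]]]] u.
  assert (hA : Acoef a l = 1 + u) by (unfold u; ring).
  apply is_derive_Reals in hY, hh.
  assert (eY : dY = 36 * a ^ 2 * exp (- a * t) * dpsi (exp (- a * t)) (1 + u)).
  { rewrite <- hA, <- (is_derive_unique _ _ _ hY).
    apply is_derive_unique, is_derive_Yfun; lra. }
  eexists. split.
  - exact (is_derive_minus _ _ t _ _ hh (is_derive_approx_H a u t ha ht)).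
  - unfold minus, plus, opp; simpl. rewrite eY, Yfun_psi, hA in he.
    rewrite Yfun_psi, hA. unfold approx_H, defect. rewrite <- he. ring.
Qed.

Lemma approximation_error a (H : R -> R -> R) S :
  0 < a -> 0 < S -> (forall l, 0 <= l -> IsSolH a l (fun S => H S l)) ->
  exists K, 0 <= K /\ forall l, 0 <= l -> Acoef a l - 1 <= 1 ->
    Rabs (H S l - approx_H a (Acoef a l - 1) S) <= K * (Acoef a l - 1) ^ 2.
Proof.
  intros ha hS hsol.
  set (s0 := exp (- a * S)).
  assert (hs0 := exp_neg_mul_bounds a S ha hS). fold s0 in hs0.
  set (C := coef_abs_sum2 defect_cofactor / (2835 * (1 - s0) ^ 4)).
  assert (hC : 0 <= C).
  { apply Rdiv_le_0_compat.
    - eapply Rle_trans; [apply Rabs_pos | apply (horner2_abs_le _ 0 0)];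
        rewrite Rabs_R0; lra.
    - generalize (pow_lt (1 - s0) 4 ltac:(lra)). lra. }
  assert (ha4 : 0 < a ^ 4) by (apply pow_lt, ha).
  exists (a ^ 3 * C / 12). split.
  { generalize (pow_lt a 3 ha). intro. apply Rdiv_le_0_compat; [nra | lra]. }
  intros l hl hu1.
  set (u := Acoef a l - 1) in *.
  assert (hu0 : 0 <= u) by (generalize (Acoef_ge1 a l ha hl); unfold u; lra).
  destruct (hsol l hl) as [hode hlim].
  replace (a ^ 3 * C / 12 * u ^ 2) with (a ^ 4 * C * u ^ 2 / (4 * (3 * a))) by (field; lra).
  apply (linear_ode_abs_bound S (3 * a) (a ^ 4 * C * u ^ 2)
    (fun t => H t l - approx_H a u t) (fun t => Yfun t a l)
    (fun t => a ^ 4 * defect (exp (- a * t)) u)); try lra.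
  - generalize (pow2_ge_0 u). intro. apply Rmult_le_pos; [apply Rmult_le_pos|]; lra.
  - intros t ht. apply (ex_derive_continuous (K := R_AbsRing) (V := R_NormedModule)).
    eexists. apply is_derive_Yfun; lra.
  - intros t ht. exact (approximation_residual_ode a l (fun S => H S l) t ha hl ht (hode t ht)).
  - intros t ht. rewrite Ropp_mult_distr_l. apply Yfun_le; lra.
  - intros t ht. destruct (exp_neg_mul_bounds a t ha ltac:(lra)) as [hs1 hs2].
    assert (hle : exp (- a * t) <= s0).
    { unfold s0. destruct (Req_dec t S) as [->|hne]; [lra|].
      left. apply exp_increasing. nra. }
    rewrite Rabs_mult, (Rabs_pos_eq (a ^ 4)) by lra.
    replace (a ^ 4 * C * u ^ 2) with (a ^ 4 * (C * u ^ 2)) by ring.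
    apply Rmult_le_compat_l; [lra | apply defect_abs_le; lra].
  - apply (is_lim_minus _ _ p_infty 0 0).
    + apply is_lim_p_infty_of_eps, hlim.
    + apply is_lim_approx_H, ha.
    + unfold is_Rbar_minus, is_Rbar_plus. simpl. rewrite Ropp_0, Rplus_0_r. reflexivity.
Qed.

Lemma Acoef_sub1_bounds a l : 0 < a -> 0 < l ->
  0 < Acoef a l - 1 /\ Acoef a l - 1 <= 3 * l / (2 * a ^ 2) /\
  l = a ^ 2 * ((Acoef a l - 1) ^ 2 + 2 * (Acoef a l - 1)) / 3.
Proof.
  intros ha hl.
  assert (ha2 : 0 < a ^ 2) by (apply pow_lt, ha).
  assert (hx : 0 < 3 * l / a ^ 2) by (apply Rdiv_lt_0_compat; lra).
  assert (hsq := Acoef_sq a l ha ltac:(lra)).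
  assert (hA := Acoef_ge1 a l ha ltac:(lra)).
  split; [|split].
  - nra.
  - replace (3 * l / (2 * a ^ 2)) with (3 * l / a ^ 2 / 2) by (field; lra). nra.
  - replace ((Acoef a l - 1) ^ 2 + 2 * (Acoef a l - 1)) with (Acoef a l ^ 2 - 1) by ring.
    rewrite hsq. field. lra.
Qed.

Lemma limit1_in_of_linear_bound (f : R -> R) (L C d : R) : 0 < d ->
  (forall l, 0 < l < d -> Rabs (f l - L) <= C * l) ->
  limit1_in f (fun l => 0 < l) L 0.
Proof.
  intros hd hf eps heps.
  assert (hC : 0 < Rabs C + 1) by (generalize (Rabs_pos C); lra).
  exists (Rmin d (eps / (Rabs C + 1))). split.
  - apply Rmin_glb_lt; [lra | apply Rdiv_lt_0_compat; lra].
  - simpl. unfold R_dist. intros l [hl hdist].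
    rewrite Rminus_0_r, Rabs_pos_eq in hdist by lra.
    assert (l < d) by (generalize (Rmin_l d (eps / (Rabs C + 1))); lra).
    assert (hle : (Rabs C + 1) * l < eps).
    { apply (Rmult_lt_reg_r (/ (Rabs C + 1))); [apply Rinv_0_lt_compat, hC|].
      replace ((Rabs C + 1) * l * / (Rabs C + 1)) with l by (field; lra).
      generalize (Rmin_r d (eps / (Rabs C + 1))). unfold Rdiv. lra. }
    eapply Rle_lt_trans; [apply hf; lra|].
    generalize (Rle_abs C). nra.
Qed.

Section DifferenceQuotient.

Variables (a K S : R) (H : R -> R -> R).
Hypotheses (ha : 0 < a) (hK : 0 <= K).
Hypothesis herr : forall l, 0 <= l -> Acoef a l - 1 <= 1 ->
  Rabs (H S l - approx_H a (Acoef a l - 1) S) <= K * (Acoef a l - 1) ^ 2.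

Lemma H_at_lambda0 : H S 0 = a ^ 3 * h0 (exp (- a * S)).
Proof.
  assert (hA0 : Acoef a 0 = 1).
  { unfold Acoef. replace (1 + 3 * 0 / a ^ 2) with 1 by (field; lra). apply sqrt_1. }
  assert (h := herr 0 (Rle_refl 0) ltac:(rewrite hA0; lra)). rewrite hA0 in h.
  replace (K * (1 - 1) ^ 2) with 0 in h by ring.
  assert (e := Rabs_eq_0 _ (Rle_antisym _ _ h (Rabs_pos _))).
  unfold approx_H in e. lra.
Qed.

Lemma difference_quotient_estimate l : 0 < l < 2 * a ^ 2 / 3 ->
  Rabs ((Fcal H S l - Fcal H S 0) / l - a * h1 (exp (- a * S)) / 2)
  <= 3 * (a * Rabs (h1 (exp (- a * S))) / 4 + K / (2 * a ^ 2)) / (2 * a ^ 2) * l.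
Proof.
  intro hl.
  set (s := exp (- a * S)).
  assert (ha2 : 0 < a ^ 2) by (apply pow_lt, ha).
  destruct (Acoef_sub1_bounds a l ha ltac:(lra)) as [hu0 [hul hl_u]].
  set (u := Acoef a l - 1) in *.
  assert (hu1 : u <= 1).
  { apply (Rle_trans _ _ _ hul). apply (Rmult_le_reg_r (2 * a ^ 2)); [lra|].
    unfold Rdiv. rewrite Rmult_assoc, Rinv_l by lra. lra. }
  set (E := H S l - approx_H a u S).
  assert (hE : Rabs E <= K * u ^ 2) by (apply herr; [lra | exact hu1]).
  assert (eq : (Fcal H S l - Fcal H S 0) / l - a * h1 s / 2
               = (2 * E - a ^ 3 * h1 s * u ^ 2) / (2 * a ^ 2 * u * (u + 2))).
  { unfold Fcal. rewrite H_at_lambda0. fold s.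
    replace (H S l) with (E + a ^ 3 * (h0 s + u * h1 s)) by (unfold E, approx_H; fold s; ring).
    rewrite hl_u. field. repeat split; nra. }
  set (B := a * Rabs (h1 s) / 4 + K / (2 * a ^ 2)).
  assert (hB : 0 <= B).
  { unfold B. generalize (Rabs_pos (h1 s)). intro.
    assert (0 <= K / (2 * a ^ 2)) by (apply Rdiv_le_0_compat; lra). nra. }
  assert (hN : Rabs (2 * E - a ^ 3 * h1 s * u ^ 2) <= 4 * a ^ 2 * B * u ^ 2).
  { replace (4 * a ^ 2 * B * u ^ 2) with (2 * (K * u ^ 2) + a ^ 3 * u ^ 2 * Rabs (h1 s))
      by (unfold B; field; lra).
    unfold Rminus. eapply Rle_trans; [apply Rabs_triang|].
    rewrite Rabs_Ropp, Rabs_mult, (Rabs_pos_eq 2) by lra.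
    replace (a ^ 3 * h1 s * u ^ 2) with (a ^ 3 * u ^ 2 * h1 s) by ring.
    rewrite Rabs_mult, (Rabs_pos_eq (a ^ 3 * u ^ 2)) by (generalize (pow_lt a 3 ha); nra).
    lra. }
  rewrite eq, Rabs_div by nra. rewrite (Rabs_pos_eq (2 * a ^ 2 * u * (u + 2))) by nra.
  apply Rle_trans with (B * u).
  - apply (Rmult_le_reg_r (2 * a ^ 2 * u * (u + 2))); [nra|].
    unfold Rdiv. rewrite Rmult_assoc, Rinv_l, Rmult_1_r by nra.
    apply (Rle_trans _ _ _ hN).
    assert (0 <= a ^ 2 * B * u ^ 3)
      by (apply Rmult_le_pos; [apply Rmult_le_pos|apply pow_le]; lra).
    nra.
  - replace (3 * B / (2 * a ^ 2) * l) with (B * (3 * l / (2 * a ^ 2))) by (field; lra).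
    apply Rmult_le_compat_l; lra.
Qed.

End DifferenceQuotient.

Theorem mainTheorem5 (a : R) (H : R -> R -> R) :
  0 < a ->
  (forall l, 0 <= l -> IsSolH a l (fun S => H S l)) ->
  forall S, 0 < S ->
  let s := exp (- a * S) in
  Fcal H S 0 = 2 * a ^ 3 * s ^ 2 * (1 + s ^ 2) / (1 - s ^ 2) ^ 3 /\
  limit1_in (fun l => (Fcal H S l - Fcal H S 0) / l) (fun l => 0 < l)
    (- (a * s ^ 2 * (385 - 189 * s + 154 * s ^ 2 + 54 * s ^ 3 - 11 * s ^ 4 - 9 * s ^ 5))
       / (70 * (1 - s) * (1 + s) ^ 4)) 0.
Proof.
  intros ha hsol S hS s.
  assert (hs := exp_neg_mul_bounds a S ha hS). fold s in hs.
  destruct (approximation_error a H S ha hS hsol) as [K [hK herr]].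
  split.
  - unfold Fcal. rewrite (H_at_lambda0 a K S H ha herr). fold s. unfold h0.
    assert (0 < 1 - s ^ 2) by nra.
    field. repeat split; try lra; apply pow_nonzero; lra.
  - replace (- (a * s ^ 2 * (385 - 189 * s + 154 * s ^ 2 + 54 * s ^ 3 - 11 * s ^ 4 - 9 * s ^ 5))
       / (70 * (1 - s) * (1 + s) ^ 4)) with (a * h1 s / 2)
      by (unfold h1; field; repeat split; try lra; apply pow_nonzero; lra).
    eapply limit1_in_of_linear_bound;
      [| exact (difference_quotient_estimate a K S H ha hK herr)].
    generalize (pow_lt a 2 ha). lra.
Qed.
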